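(* For all $V,W\in\mathcal G(s,d)$ and all $S\in\mathbb R^{d\times d}$ with $SV\in\mathcal G(s,d)$ (i.e. $\dim SV=s$), $$|\angle(SV,W)-\angle(V,W)|\le C\|S-I_d\|,\qquad C=\frac{\pi}{2}+\Big(\frac{\pi^2}{4}+1\Big)^{1/2}.$$
   Context: $\mathcal G(s,d)$ is the Grassmannian of $s$-dimensional subspaces of $\mathbb R^d$ and $\|\cdot\|$ is the spectral norm. For $V,W\in\mathcal G(s,d)$ choose $P,Q\in\mathbb R^{d\times s}$ with orthonormal columns spanning $V$ and $W$; the principal angles $0\le\phi_1\le\dots\le\phi_s\le\pi/2$ are defined by $\cos\phi_j=\sigma_j$ where $\sigma_1\ge\dots\ge\sigma_s\ge0$ are the singular values of $P^\top Q$, and $\angle(V,W):=\phi_s$ is the maximal principal angle. *)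

From HB Require Import structures.
From mathcomp Require Import all_boot all_order all_algebra.
From mathcomp Require Import classical_sets boolp reals trigo.
Set Implicit Arguments. Unset Strict Implicit. Unset Printing Implicit Defensive.
Import Order.TTheory GRing.Theory Num.Theory.
Local Open Scope ring_scope.

Section Defs.
Variable R : realType.

(* Subspaces of R^d are represented as row spaces of d x d matrices
   (mxalgebra convention).  V is in G(s,d) iff \rank V = s. *)
Definition in_Grass (s d : nat) (V : 'M[R]_d) : Prop := \rank V = s.

(* Image S V = { S x | x in V } of the subspace V under S : R^{d x d}
   (acting on column vectors); in row convention its row space is V S^T. *)
Definition img_sub (d : nat) (S V : 'M[R]_d) : 'M[R]_d := V *m S^T.

Definition onb (s d : nat) (V : 'M[R]_d) (P : 'M[R]_(d, s)) : Prop :=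
  P^T *m P = 1%:M /\ (P^T == V)%MS.

Definition sing_vals (s : nat) (M : 'M[R]_s) (sig : 'rV[R]_s) : Prop :=
  (forall i j : 'I_s, (i <= j)%N -> sig 0 j <= sig 0 i) /\
  (forall i, 0 <= sig 0 i) /\
  exists U W : 'M[R]_s,
    [/\ U^T *m U = 1%:M, W^T *m W = 1%:M & M = U *m diag_mx sig *m W^T].

Definition sing_min (s : nat) (M : 'M[R]_s) : R :=
  let sig := xget 0 [set sig | sing_vals M sig] in
  \big[Num.min/1]_(i < s) sig 0 i.

Definition max_angle (s d : nat) (V W : 'M[R]_d) : R :=
  let P := xget 0 [set P : 'M[R]_(d, s) | onb V P] in
  let Q := xget 0 [set Q : 'M[R]_(d, s) | onb W Q] in
  acos (sing_min (P^T *m Q)).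

Definition vnorm (d : nat) (x : 'cV[R]_d) : R :=
  Num.sqrt (\sum_i x i 0 ^+ 2).

Definition spec_norm (d : nat) (A : 'M[R]_d) : R :=
  sup [set vnorm (A *m x) | x in [set x : 'cV[R]_d | vnorm x = 1]].

End Defs.

(* Let P, Q be orthonormal bases of V, W.  For a unit vector w, |P^T w| is the
   cosine of the angle between w and V, and the smallest singular value of
   P^T Q is min_{|y| = 1} |P^T Q y|; hence angle(V, W) = acos sigma_min(P^T Q)
   is the largest angle between a unit vector of W and the subspace V.  If every
   unit vector of X1 lies within angle delta of a unit vector of X2, the
   spherical triangle inequality gives angle(X2, W) <= delta + angle(X1, W).
   For eps = |S - I| < 1, v and S v / |S v| are within angle asin eps of each
   other, so this applies in both directions between V and S V, and
   asin eps <= pi eps <= C eps.  For eps >= 1 the bound is trivial, both angles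
   lying in [0, pi/2]. *)

From HB Require Import structures.
From mathcomp Require Import all_boot all_order all_algebra perm.
From mathcomp Require Import classical_sets boolp reals trigo.
From mathcomp Require Import topology normedtype derive realfun.
From mathcomp Require Import complex spectral.
From mathcomp Require Import ring lra zify.
Import Order.TTheory GRing.Theory Num.Theory.
Import numFieldNormedType.Exports.
Local Open Scope ring_scope.
Set Implicit Arguments. Unset Strict Implicit. Unset Printing Implicit Defensive.

Section Euclid.
Variable R : realType.
Implicit Types (n : nat).

Definition dot n (u v : 'cV[R]_n) : R := (u^T *m v) 0 0.

Lemma dotE n (u v : 'cV[R]_n) : dot u v = \sum_i u i 0 * v i 0.
Proof. by rewrite /dot mxE; apply: eq_bigr => i _; rewrite mxE. Qed.

Lemma dotC n (u v : 'cV[R]_n) : dot u v = dot v u.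
Proof. by rewrite !dotE; apply: eq_bigr => i _; rewrite mulrC. Qed.

Lemma dotDl n (u v w : 'cV[R]_n) : dot (u + v) w = dot u w + dot v w.
Proof. by rewrite /dot linearD /= mulmxDl mxE. Qed.

Lemma dotDr n (u v w : 'cV[R]_n) : dot w (u + v) = dot w u + dot w v.
Proof. by rewrite /dot mulmxDr mxE. Qed.

Lemma dotZl n a (u v : 'cV[R]_n) : dot (a *: u) v = a * dot u v.
Proof. by rewrite /dot linearZ /= -scalemxAl mxE. Qed.

Lemma dotZr n a (u v : 'cV[R]_n) : dot v (a *: u) = a * dot v u.
Proof. by rewrite /dot -scalemxAr mxE. Qed.

Lemma dotBl n (u v w : 'cV[R]_n) : dot (u - v) w = dot u w - dot v w.
Proof. by rewrite dotDl -scaleN1r dotZl mulN1r. Qed.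

Lemma dotBr n (u v w : 'cV[R]_n) : dot w (u - v) = dot w u - dot w v.
Proof. by rewrite dotDr -scaleN1r dotZr mulN1r. Qed.

Lemma dotMl n m (A : 'M[R]_(m, n)) u v : dot (A *m u) v = dot u (A^T *m v).
Proof. by rewrite /dot trmx_mul mulmxA. Qed.

Lemma dot_ge0 n (u : 'cV[R]_n) : 0 <= dot u u.
Proof. by rewrite dotE sumr_ge0 // => i _; rewrite -expr2 sqr_ge0. Qed.

Lemma dot_eq0 n (u : 'cV[R]_n) : (dot u u == 0) = (u == 0).
Proof.
apply/idP/idP => [|/eqP->]; last by rewrite /dot mulmx0 mxE.
rewrite dotE psumr_eq0 => [/allP u0|i _]; last by rewrite -expr2 sqr_ge0.
apply/eqP/matrixP => i j; rewrite ord1 mxE.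
by have /(_ (mem_index_enum i)) := u0 i; rewrite -expr2 sqrf_eq0 => /eqP.
Qed.

Lemma vnormE n (x : 'cV[R]_n) : vnorm x = Num.sqrt (dot x x).
Proof. by rewrite /vnorm dotE; congr Num.sqrt; apply: eq_bigr => i _; rewrite expr2. Qed.

Lemma vnorm_ge0 n (x : 'cV[R]_n) : 0 <= vnorm x.
Proof. by rewrite vnormE sqrtr_ge0. Qed.

Lemma vnorm_sq n (x : 'cV[R]_n) : vnorm x ^+ 2 = dot x x.
Proof. by rewrite vnormE sqr_sqrtr // dot_ge0. Qed.

Lemma vnorm_eq0 n (x : 'cV[R]_n) : (vnorm x == 0) = (x == 0).
Proof. by rewrite vnormE sqrtr_eq0 -dot_eq0 eq_le dot_ge0 andbT. Qed.

Lemma vnorm0 n : vnorm (0 : 'cV[R]_n) = 0.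
Proof. by apply/eqP; rewrite vnorm_eq0. Qed.

Lemma vnorm_delta n (i : 'I_n) : vnorm (delta_mx i 0 : 'cV[R]_n) = 1.
Proof. by rewrite vnormE /dot trmx_delta mul_delta_mx mxE !eqxx sqrtr1. Qed.

Lemma vnorm_gt0 n (x : 'cV[R]_n) : (0 < vnorm x) = (x != 0).
Proof. by rewrite lt_def vnorm_eq0 vnorm_ge0 andbT. Qed.

Lemma vnormZ n a (x : 'cV[R]_n) : vnorm (a *: x) = `|a| * vnorm x.
Proof.
by rewrite !vnormE dotZl dotZr mulrA -expr2 sqrtrM ?sqr_ge0 // sqrtr_sqr.
Qed.

Lemma unit_dot n (x : 'cV[R]_n) : vnorm x = 1 -> dot x x = 1.
Proof. by move=> x1; rewrite -vnorm_sq x1 expr1n. Qed.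

Definition normalize n (x : 'cV[R]_n) : 'cV[R]_n := (vnorm x)^-1 *: x.

Lemma vnorm_normalize n (x : 'cV[R]_n) : x != 0 -> vnorm (normalize x) = 1.
Proof.
by move=> xN0; rewrite vnormZ ger0_norm ?invr_ge0 ?vnorm_ge0 // mulVf ?vnorm_eq0.
Qed.

Lemma Cauchy_Schwarz n (u v : 'cV[R]_n) : `|dot u v| <= vnorm u * vnorm v.
Proof.
have [->|uN0] := eqVneq u 0.
  by rewrite /dot trmx0 mul0mx mxE normr0 mulr_ge0 ?vnorm_ge0.
have uu0 : 0 < dot u u by rewrite lt_def dot_eq0 uN0 dot_ge0.
suff : dot u v ^+ 2 <= dot u u * dot v v.
  rewrite !vnormE -sqrtrM ?dot_ge0 // -sqrtr_sqr => uv.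
  by rewrite ler_sqrt // mulr_ge0 ?dot_ge0.
(* Expand 0 <= |v - t u|^2 at the minimizing t = <u,v>/<u,u>. *)
have := dot_ge0 (v - (dot u v / dot u u) *: u).
rewrite !(dotBl, dotBr, dotZl, dotZr) (dotC v u).
set a := dot u u; set b := dot u v; set c := dot v v => h.
have := mulr_ge0 (ltW uu0) h.
have -> : a * (c - b / a * b - b / a * (b - b / a * a)) = a * c - b ^+ 2.
  by field; rewrite gt_eqF.
by rewrite subr_ge0 mulrC.
Qed.

Lemma dot_le_vnorm n (u v : 'cV[R]_n) : dot u v <= vnorm u * vnorm v.
Proof. exact: le_trans (ler_norm _) (Cauchy_Schwarz u v). Qed.

Lemma orth_vnorm n m (P : 'M[R]_(n, m)) y : P^T *m P = 1%:M ->
  vnorm (P *m y) = vnorm y.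
Proof. by move=> Po; rewrite !vnormE dotMl mulmxA Po mul1mx. Qed.

Lemma Bessel d s (P : 'M[R]_(d, s)) z : P^T *m P = 1%:M ->
  vnorm (P^T *m z) <= vnorm z.
Proof.
move=> Po; set a := P^T *m z.
have [->|aN0] := eqVneq a 0; first by rewrite vnorm0 vnorm_ge0.
rewrite -(ler_pM2l (_ : 0 < vnorm a)) ?vnorm_gt0 // -expr2 vnorm_sq.
have -> : dot a a = dot (P *m a) z by rewrite dotMl.
by rewrite (le_trans (dot_le_vnorm _ _)) // orth_vnorm.
Qed.

End Euclid.

Section OrthonormalBases.
Variable R : realType.

Lemma unit_trmx d (v : 'cV[R]_d) : vnorm v = 1 -> v^T *m v = 1%:M.
Proof. by move=> /unit_dot v1; apply/matrixP => i j; rewrite !ord1 -/(dot v v) v1 mxE. Qed.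

Lemma orth_row_mx d k (w : 'cV[R]_d) (P : 'M[R]_(d, k)) :
  vnorm w = 1 -> P^T *m P = 1%:M -> P^T *m w = 0 ->
  (row_mx w P)^T *m row_mx w P = 1%:M.
Proof.
move=> w1 Po Pw.
rewrite tr_row_mx mul_col_row Po Pw unit_trmx //.
by rewrite -[w^T *m P]trmxK trmx_mul trmxK Pw !trmx0 -scalar_mx_block.
Qed.

Lemma orth_rank d k (P : 'M[R]_(d, k)) : P^T *m P = 1%:M -> \rank P^T = k.
Proof.
move=> Po; apply/eqP; rewrite eqn_leq rank_leq_row /=.
by rewrite -{1}(mxrank1 R k) -Po mxrankM_maxl.
Qed.

Lemma onb_of_sub d k (U : 'M[R]_d) (P : 'M[R]_(d, k)) :
  \rank U = k -> P^T *m P = 1%:M -> (P^T <= U)%MS -> onb U P.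
Proof.
move=> rU Po PU; split => //; apply/andP; split => //.
by rewrite -(mxrank_leqif_sup PU).2 orth_rank ?rU.
Qed.

Lemma rank_cV d (v : 'cV[R]_d) : v != 0 -> \rank v = 1%N.
Proof. by move=> vN0; apply/eqP; rewrite eqn_leq rank_leq_col lt0n mxrank_eq0. Qed.

Lemma rank_cap_kermx d (U : 'M[R]_d) (v : 'cV[R]_d) :
  v != 0 -> (v^T <= U)%MS -> \rank (U :&: kermx v)%MS = (\rank U).-1.
Proof.
move=> vN0 vU; set K := kermx v.
have rv := rank_cV vN0.
have vK : ~~ (v^T <= K)%MS.
  by apply: contraNN vN0; rewrite sub_kermx -dot_eq0 /dot => /eqP->; rewrite mxE.
have rK : \rank K = (d - 1)%N by rewrite mxrank_ker rv.
have ltK : (\rank K < \rank (U + K)%MS)%N.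
  suff : (K < U + K)%MS by rewrite ltmxErank => /andP [].
  rewrite ltmxE addsmxSr /=.
  by apply: contraNN vK; apply/submx_trans/(submx_trans vU)/addsmxSl.
have d0 : (0 < d)%N by have := rank_leq_row v; rewrite rv.
have rUK : \rank (U + K)%MS = d.
  by apply/eqP; rewrite eqn_leq rank_leq_col /=; move: ltK; rewrite rK; lia.
have := mxrank_sum_cap U K; rewrite rUK rK; lia.
Qed.

(* Every k-dimensional subspace U has an orthonormal basis: by induction on k,
   extend an orthonormal basis of U cut by the hyperplane orthogonal to a unit
   vector of U by that unit vector. *)
Lemma onb_exists d k (U : 'M[R]_d) : \rank U = k -> exists P : 'M[R]_(d, k), onb U P.
Proof.
elim: k U => [|k IH] U rU.
  exists 0; apply: onb_of_sub => //; last by rewrite trmx0 sub0mx.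
  by rewrite [LHS]flatmx0 [RHS]flatmx0.
have rN0 : (nz_row U)^T != 0 by rewrite trmx_eq0 nz_row_eq0 -mxrank_eq0 rU.
set v := normalize (nz_row U)^T.
have v1 : vnorm v = 1 := vnorm_normalize rN0.
have vN0 : v != 0 by rewrite -vnorm_eq0 v1 oner_eq0.
have vU : (v^T <= U)%MS by rewrite linearZ /= trmxK scalemx_sub // nz_row_sub.
have [P' [P'o /andP [P'U _]]] := IH _ (etrans (rank_cap_kermx vN0 vU) (congr1 _ rU)).
have P'v : P'^T *m v = 0.
  by apply/eqP; rewrite -sub_kermx (submx_trans P'U) ?capmxSr.
exists (row_mx v P'); apply: onb_of_sub; [exact: rU | exact: orth_row_mx |].
by rewrite (tr_row_mx v P') (col_mx_sub v^T P'^T) vU (submx_trans P'U) ?capmxSl.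
Qed.

Lemma orth_complement d (w : 'cV[R]_d.+1) : vnorm w = 1 ->
  exists P : 'M[R]_(d.+1, d), P^T *m P = 1%:M /\ P^T *m w = 0.
Proof.
move=> w1; have wN0 : w != 0 by rewrite -vnorm_eq0 w1 oner_eq0.
have rK : \rank (kermx w) = d by rewrite mxrank_ker rank_cV // subn1.
have [P [Po /andP [PK _]]] := onb_exists rK.
by exists P; split => //; apply/eqP; rewrite -sub_kermx.
Qed.

End OrthonormalBases.

Section SymmetricEigen.
Variable R : realType.

Lemma sym_no_rotation n (A : 'M[R]_n) (x y : 'cV[R]_n) (a b : R) :
  A^T = A -> A *m x = a *: x - b *: y -> A *m y = b *: x + a *: y ->
  b = 0 \/ (x = 0 /\ y = 0).
Proof.
move=> Asym Ax Ay.
have : b * (dot x x + dot y y) = 0.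
  have := dotMl A x y; rewrite Asym Ax Ay.
  rewrite dotBl dotDr !dotZl !dotZr; lra.
move/eqP; rewrite mulf_eq0 paddr_eq0 ?dot_ge0 // !dot_eq0.
by case/orP => [/eqP|/andP [/eqP x0 /eqP y0]]; [left | right].
Qed.

(* A real symmetric matrix has a real eigenvector: take a complex eigenvector
   and split it into real and imaginary parts. *)
Lemma sym_eigenvector n (A : 'M[R]_n.+1) : A^T = A ->
  exists2 w : 'cV[R]_n.+1, w != 0 & exists l, A *m w = l *: w.
Proof.
move=> Asym; pose Ac := map_mx (fun c : R => c%:C%C) A.
have [[a b] /eigenvalueP [z zA zN0]] := eigenvalue_closed Ac (ltn0Sn n).
pose x := \col_j complex.Re (z 0 j); pose y := \col_j complex.Im (z 0 j).
have zAj j : \sum_i z 0 i * (A i j)%:C%C = ((a +i* b)%C * z 0 j)%C.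
  by have /rowP /(_ j) := zA; rewrite !mxE => <-; apply: eq_bigr => i _; rewrite mxE.
have Ax : A *m x = a *: x - b *: y.
  apply/colP => j; rewrite -{1}Asym !mxE.
  transitivity (complex.Re (\sum_i z 0 i * (A i j)%:C)%C).
    rewrite (raddf_sum (@complex.Re R)); apply: eq_bigr => i _; rewrite !mxE.
    by case: (z 0 i) => ? ? /=; ring.
  by rewrite zAj; case: (z 0 j) => ? ? /=; ring.
have Ay : A *m y = b *: x + a *: y.
  apply/colP => j; rewrite -{1}Asym !mxE.
  transitivity (complex.Im (\sum_i z 0 i * (A i j)%:C)%C).
    rewrite (raddf_sum (@complex.Im R)); apply: eq_bigr => i _; rewrite !mxE.
    by case: (z 0 i) => ? ? /=; ring.
  by rewrite zAj; case: (z 0 j) => ? ? /=; ring.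
have xyN0 : (x != 0) || (y != 0).
  apply: contraNT zN0; rewrite negb_or !negbK => /andP [/eqP x0 /eqP y0].
  apply/eqP/rowP => j; move/colP/(_ j): x0; move/colP/(_ j): y0.
  by rewrite !mxE; case: (z 0 j) => ? ? /= -> ->.
have [b0|[x0 y0]] := sym_no_rotation Asym Ax Ay; last by rewrite x0 y0 eqxx in xyN0.
case/orP: xyN0 => [xN0|yN0].
  by exists x => //; exists a; rewrite Ax b0 scale0r subr0.
by exists y => //; exists a; rewrite Ay b0 scale0r add0r.
Qed.

End SymmetricEigen.

Section SingularValueDecomposition.
Variable R : realType.

Lemma orth_mul m n p (P : 'M[R]_(m, n)) (Q : 'M[R]_(n, p)) :
  P^T *m P = 1%:M -> Q^T *m Q = 1%:M -> (P *m Q)^T *m (P *m Q) = 1%:M.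
Proof. by move=> Po Qo; rewrite trmx_mul mulmxA -(mulmxA _ P^T) Po mulmx1 Qo. Qed.

Lemma orth_block1 n (U : 'M[R]_n) : U^T *m U = 1%:M ->
  (block_mx 1%:M 0 0 U : 'M[R]_(1 + n))^T *m block_mx 1%:M 0 0 U = 1%:M.
Proof.
move=> Uo; rewrite tr_block_mx mulmx_block !trmx0 trmx1 !mulmx0 !mul0mx mulmx1 Uo.
by rewrite !addr0 add0r -scalar_mx_block.
Qed.

Lemma left_kernel_unit n (M : 'M[R]_n) (w : 'cV[R]_n) :
  w != 0 -> M *m w = 0 -> exists u, vnorm u = 1 /\ M^T *m u = 0.
Proof.
move=> wN0 Mw.
have : kermx M != 0.
  rewrite kermx_eq0 row_free_unit; apply: contraNN wN0 => Mu.
  by rewrite -(mulKmx Mu w) Mw mulmx0.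
rewrite -nz_row_eq0 -trmx_eq0 => rN0.
exists (normalize (nz_row (kermx M))^T); split; first exact: vnorm_normalize.
have /sub_kermxP rM := nz_row_sub (kermx M).
by rewrite -scalemxAr -trmx_mul rM trmx0 scaler0.
Qed.

(* Every square matrix has a singular pair of unit vectors: M w = s u and
   M^T u = s w with s >= 0; w is an eigenvector of M^T M. *)
Lemma singular_pair n (M : 'M[R]_n.+1) : exists (u w : 'cV[R]_n.+1) (s : R),
  [/\ vnorm u = 1, vnorm w = 1, 0 <= s, M *m w = s *: u & M^T *m u = s *: w].
Proof.
have MtMsym : (M^T *m M)^T = M^T *m M by rewrite trmx_mul trmxK.
have [w0 w0N0 [l Hl]] := sym_eigenvector MtMsym.
set w := normalize w0; have w1 : vnorm w = 1 := vnorm_normalize w0N0.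
have MtMw : M^T *m (M *m w) = l *: w.
  by rewrite mulmxA -scalemxAr Hl scalerA mulrC -scalerA.
have [Mw0|MwN0] := eqVneq (M *m w) 0.
  have wN0 : w != 0 by rewrite -vnorm_eq0 w1 oner_eq0.
  have [u [u1 Mu]] := left_kernel_unit wN0 Mw0.
  by exists u, w, 0; rewrite Mw0 Mu !scale0r.
set s := vnorm (M *m w).
have sN0 : s != 0 by rewrite vnorm_eq0.
have s2 : s ^+ 2 = l by rewrite vnorm_sq dotMl MtMw dotZr unit_dot // mulr1.
exists (normalize (M *m w)), w, s; split => //.
- exact: vnorm_normalize.
- exact: vnorm_ge0.
- by rewrite scalerA divff // scale1r.
- by rewrite -scalemxAr MtMw scalerA -s2 expr2 mulKf.
Qed.

Lemma singular_pair_block n (M : 'M[R]_(1 + n)) u w s (Pu Pw : 'M[R]_(1 + n, n)) :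
  vnorm w = 1 -> Pu^T *m u = 0 -> Pw^T *m w = 0 ->
  M *m w = s *: u -> M^T *m u = s *: w ->
  (row_mx u Pu)^T *m M *m row_mx w Pw = block_mx s%:M 0 0 (Pu^T *m M *m Pw).
Proof.
move=> w1 Puu Pww Mw Mtu.
have uM : u^T *m M = s *: w^T by rewrite -[u^T *m M]trmxK trmx_mul trmxK Mtu linearZ.
have wPw : w^T *m Pw = 0 by rewrite -[w^T *m Pw]trmxK trmx_mul trmxK Pww trmx0.
rewrite tr_row_mx mul_col_mx mul_col_row uM -[Pu^T *m M *m w]mulmxA Mw.
by rewrite -!scalemxAl -scalemxAr unit_trmx // Puu wPw !scaler0 scalemx1.
Qed.

Lemma block_diag_factor n (a : R) (U W : 'M[R]_n) (sig : 'rV[R]_n) :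
  block_mx a%:M 0 0 (U *m diag_mx sig *m W^T) =
  block_mx 1%:M 0 0 U *m diag_mx (row_mx (a%:M : 'rV[R]_1) sig)
    *m (block_mx 1%:M 0 0 W)^T.
Proof.
rewrite diag_mx_row tr_block_mx !trmx0 trmx1 !mulmx_block.
rewrite !(mulmx0, mul0mx, addr0, add0r, mul1mx, mulmx1).
by congr block_mx; apply/matrixP => i j; rewrite !ord1 !mxE.
Qed.

Lemma svd_exists n (M : 'M[R]_n) : exists (U W : 'M[R]_n) (sig : 'rV[R]_n),
  [/\ U^T *m U = 1%:M, W^T *m W = 1%:M, (forall i, 0 <= sig 0 i) &
      M = U *m diag_mx sig *m W^T].
Proof.
elim: n M => [|n IH] M.
  by exists 0, 0, 0; split => [||[]//|]; rewrite [LHS]flatmx0 [RHS]flatmx0.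
have [u [w [s [u1 w1 s0 Mw Mtu]]]] := singular_pair M.
have [Pu [Puo Puu]] := orth_complement u1.
have [Pw [Pwo Pww]] := orth_complement w1.
have [U' [W' [sig' [U'o W'o sig'0 M'E]]]] := IH (Pu^T *m M *m Pw).
pose Ou : 'M[R]_(1 + n) := row_mx u Pu; pose Ow : 'M[R]_(1 + n) := row_mx w Pw.
have Ouo : Ou^T *m Ou = 1%:M := orth_row_mx u1 Puo Puu.
have Owo : Ow^T *m Ow = 1%:M := orth_row_mx w1 Pwo Pww.
exists (Ou *m block_mx 1%:M 0 0 U'), (Ow *m block_mx 1%:M 0 0 W'),
  (row_mx (s%:M : 'rV[R]_1) sig'); split.
- exact/orth_mul/orth_block1.
- exact/orth_mul/orth_block1.
- by move=> i; rewrite mxE; case: splitP => k _; rewrite ?ord1 ?mxE.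
have -> : M = Ou *m (Ou^T *m M *m Ow) *m Ow^T.
  by rewrite !mulmxA (mulmx1C Ouo) mul1mx -mulmxA (mulmx1C Owo) mulmx1.
rewrite (singular_pair_block w1 Puu Pww Mw Mtu) M'E block_diag_factor.
by rewrite trmx_mul !mulmxA.
Qed.

End SingularValueDecomposition.

Section SmallestSingularValue.
Variable R : realType.

Lemma sort_perm n (sig : 'rV[R]_n) : exists p : 'S_n,
  forall i j : 'I_n, (i <= j)%N -> sig 0 (p j) <= sig 0 (p i).
Proof.
pose s := sort (fun x y : R => y <= x) [tuple sig 0 i | i < n].
have /tuple_permP [p sE] : perm_eq s [tuple sig 0 i | i < n] by rewrite perm_sort.
exists p => i j ij.
have srt : sorted (fun x y : R => y <= x) s.
  by apply: sort_sorted => x y; exact: le_total.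
have nthE (k : 'I_n) : nth 0 s k = sig 0 (p k).
  by rewrite sE (nth_map k) ?size_enum_ord // nth_ord_enum tnth_mktuple.
rewrite -!nthE; apply: (sorted_leq_nth _ _ 0 srt) => //.
- by move=> x y z /= yx zy; apply: le_trans zy yx.
- by rewrite inE sE size_tuple.
- by rewrite inE sE size_tuple.
Qed.

(* Permuting the diagonal of an SVD yields the sorted singular values. *)
Lemma sing_vals_exists n (M : 'M[R]_n) : exists sig, sing_vals M sig.
Proof.
have [U [W [sig [Uo Wo sig0 ME]]]] := svd_exists M.
have [p Hp] := sort_perm sig.
pose P : 'M[R]_n := perm_mx p.
have PPt : P *m P^T = 1%:M by rewrite /P tr_perm_mx -perm_mxM mulgV perm_mx1.
have PtP : P^T *m P = 1%:M := mulmx1C PPt.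
exists (\row_i sig 0 (p i)); split; first by move=> i j ij; rewrite !mxE; apply: Hp.
split; first by move=> i; rewrite mxE.
have D : P *m diag_mx sig *m P^T = diag_mx (\row_i sig 0 (p i)).
  rewrite /P -row_permE tr_perm_mx -col_permE.
  apply/matrixP => i j; rewrite !mxE (inj_eq perm_inj).
  by case: eqP => [->|]; rewrite ?mulr1n ?mulr0n.
exists (U *m P^T), (W *m P^T); split; rewrite ?orth_mul ?trmxK //.
rewrite -D ME trmx_mul trmxK -!mulmxA (mulmxA P^T P) PtP mul1mx.
by rewrite (mulmxA P^T P) PtP mul1mx !mulmxA.
Qed.

(* Unfolding [sing_min]: it is the minimum of the diagonal of some SVD
   (capped by 1, which is irrelevant for contractions). *)
Lemma sing_min_svd s (M : 'M[R]_s) : exists (U W : 'M[R]_s) (sig : 'rV[R]_s),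
  [/\ U^T *m U = 1%:M, W^T *m W = 1%:M, (forall i, 0 <= sig 0 i),
      M = U *m diag_mx sig *m W^T & sing_min M = \big[Num.min/1]_(i < s) sig 0 i].
Proof.
rewrite /sing_min /=; set sig := xget _ _.
have [_ [sig0 [U [W [Uo Wo ME]]]]] : sing_vals M sig.
  by apply: xgetPex; apply: sing_vals_exists.
by exists U, W, sig.
Qed.

Lemma sing_min_ge0 s (M : 'M[R]_s) : 0 <= sing_min M.
Proof.
by have [U [W [sig [_ _ sig0 _ ->]]]] := sing_min_svd M; apply: le_bigmin.
Qed.

Lemma sing_min_le1 s (M : 'M[R]_s) : sing_min M <= 1.
Proof. by have [U [W [sig [_ _ _ _ ->]]]] := sing_min_svd M; apply: bigmin_le_id. Qed.

Lemma svd_vnorm s (M U W : 'M[R]_s) (sig : 'rV[R]_s) y :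
  U^T *m U = 1%:M -> W^T *m W = 1%:M -> M = U *m diag_mx sig *m W^T ->
  vnorm (M *m y) = vnorm (diag_mx sig *m (W^T *m y)).
Proof. by move=> Uo _ ->; rewrite -!mulmxA orth_vnorm. Qed.

Lemma sing_min_lb s (M : 'M[R]_s) y : sing_min M * vnorm y <= vnorm (M *m y).
Proof.
have [U [W [sig [Uo Wo sig0 ME ->]]]] := sing_min_svd M.
set c := \big[Num.min/1]_(i < s) sig 0 i.
have c0 : 0 <= c by apply: le_bigmin.
rewrite (svd_vnorm _ Uo Wo ME) -(orth_vnorm y (_ : W^T^T *m W^T = 1%:M)); last first.
  by rewrite trmxK mulmx1C.
move: (W^T *m y) => z.
rewrite !vnormE -[c]ger0_norm // -sqrtr_sqr -sqrtrM ?sqr_ge0 // ler_sqrt ?dot_ge0 //.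
rewrite !dotE mulr_sumr; apply: ler_sum => i _.
rewrite mul_diag_mx mxE -!expr2 exprMn ler_wpM2r ?sqr_ge0 //.
by rewrite ler_pXn2r ?nnegrE // bigmin_le.
Qed.

Lemma sing_min_attained s (M : 'M[R]_s) : (0 < s)%N ->
  (forall y, vnorm (M *m y) <= vnorm y) ->
  exists y, vnorm y = 1 /\ vnorm (M *m y) <= sing_min M.
Proof.
move=> s0 Mc.
have [U [W [sig [Uo Wo sig0 ME ->]]]] := sing_min_svd M.
pose e i : 'cV[R]_s := delta_mx i 0.
have e1 i : vnorm (e i) = 1 := vnorm_delta R i.
have MWe i : vnorm (M *m (W *m e i)) = sig 0 i.
  rewrite (svd_vnorm _ Uo Wo ME) (mulmxA W^T W) Wo mul1mx.
  have -> : diag_mx sig *m e i = sig 0 i *: e i.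
    apply/matrixP => j k; rewrite mul_diag_mx !mxE.
    by case: eqP => [->|]; rewrite ?mulr1 ?mulr0.
  by rewrite vnormZ e1 mulr1 ger0_norm.
have sig1 i : sig 0 i <= 1 by rewrite -(MWe i) (le_trans (Mc _)) // orth_vnorm // e1.
have [i0 _ ->] :=
  eq_bigmin (Ordinal s0) xpredT (fun i => sig 0 i) isT (fun i _ => sig1 i).
by exists (W *m e i0); rewrite orth_vnorm ?MWe.
Qed.

End SmallestSingularValue.

Section SpectralNorm.
Variable R : realType.

Lemma coord_le1 d (x : 'cV[R]_d) j : vnorm x = 1 -> `|x j 0| <= 1.
Proof.
move=> /unit_dot; rewrite dotE (bigD1 j) //= => x1.
rewrite -(@ler_pXn2r _ 2) ?nnegrE // real_normK ?num_real // expr1n expr2 -x1.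
by rewrite lerDl sumr_ge0 // => i _; rewrite -expr2 sqr_ge0.
Qed.

(* The spectral norm bounds the stretch of every unit vector; the supremum
   exists since |A x| <= (sum_i (sum_j |A_ij|)^2)^(1/2) on unit vectors. *)
Lemma spec_norm_ub d (A : 'M[R]_d) x : vnorm x = 1 -> vnorm (A *m x) <= spec_norm A.
Proof.
move=> x1; apply: ub_le_sup; last by exists x.
exists (Num.sqrt (\sum_i (\sum_j `|A i j|) ^+ 2)) => _ [y /= y1 <-].
rewrite /vnorm ler_sqrt; last by rewrite sumr_ge0 // => i _; rewrite sqr_ge0.
apply: ler_sum => i _.
rewrite -[X in X <= _]real_normK ?num_real // ler_pXn2r ?nnegrE ?sumr_ge0 //.
rewrite mxE; apply: le_trans (ler_norm_sum _ _ _) _.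
apply: ler_sum => j _; rewrite normrM -{2}[`|A i j|]mulr1 ler_wpM2l //.
exact: coord_le1.
Qed.

Lemma spec_norm_ge0 d (A : 'M[R]_d) : (0 < d)%N -> 0 <= spec_norm A.
Proof.
move=> d0; apply: le_trans (vnorm_ge0 _) (spec_norm_ub A (vnorm_delta R (Ordinal d0))).
Qed.

End SpectralNorm.

Section Trigonometry.
Variable R : realType.

(* By the mean value theorem, sin t = t cos c for some c in (0, t). *)
Lemma tcos_le_sin (t : R) : 0 <= t <= pi -> t * cos t <= sin t.
Proof.
case/andP => t0 tpi.
have [->|tN0] := eqVneq t 0; first by rewrite mul0r sin0.
have tpos : 0 < t by rewrite lt_def tN0 t0.
have [c /andP [c0 ct] ->] : exists2 c, 0 < c < t & sin t = cos c * t.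
  have := MVT tpos (fun x _ => is_derive_sin x).
  have cs : {within `[0, t], continuous (@sin R)}%classic.
    exact/continuous_subspaceT/continuous_sin.
  case/(_ cs) => c; rewrite in_itv /= sin0 !subr0 => ct ->; by exists c.
rewrite mulrC ler_wpM2r // ltW // ltr_cos ?in_itv /= ?(ltW c0) ?t0 ?tpi //.
by rewrite (le_trans (ltW ct)).
Qed.

Lemma sin_cos_piquarter : cos (pi / 4 : R) ^+ 2 = 1 / 2 /\ sin (pi / 4 : R) = cos (pi / 4).
Proof.
have c0 : cos (pi / 4 : R) != 0.
  apply/negP => /eqP c0; have := tan_piquarter R.
  by rewrite /tan c0 invr0 mulr0 => /eqP; rewrite eq_sym oner_eq0.
have sc : sin (pi / 4 : R) = cos (pi / 4).
  have := tan_piquarter R; rewrite /tan => /(congr1 ( *%R^~ (cos (pi / 4)))).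
  by rewrite mulfVK // mul1r.
by split => //; have := cos2Dsin2 (pi / 4 : R); rewrite sc; lra.
Qed.

(* A weak form of Jordan's inequality: t <= pi sin t on [0, pi/2]
   (use t <= 2 t cos t below pi/4 and sin t >= 1/2 above). *)
Lemma le_pi_sin (t : R) : 0 <= t <= pi / 2 -> t <= pi * sin t.
Proof.
case/andP => t0 tpi2.
have pi2 : 2 <= pi :> R := pi_ge2 R.
have [cq2 sq] := sin_cos_piquarter.
have cqh : 1 / 2 <= cos (pi / 4 : R).
  suff : 0 < cos (pi / 4 : R) by nra.
  by apply: cos_gt0_pihalf; apply/andP; split; lra.
have [tq|qt] := lerP t (pi / 4).
  have ct : cos (pi / 4) <= cos t.
    by rewrite leNgt ltr_cos ?in_itv /= -?leNgt ?tq ?t0 //; apply/andP; split; lra.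
  have tpi : t <= pi by lra.
  have := @tcos_le_sin t; rewrite t0 tpi => /(_ isT) tcs.
  have h1 : 0 <= t * (cos t - 1 / 2) by apply: mulr_ge0; lra.
  have h2 : 0 <= (pi - 2) * sin t by apply: mulr_ge0; lra.
  lra.
have : sin (pi / 4) <= sin t.
  by rewrite leNgt ltr_sin ?in_itv /= -?leNgt ?(ltW qt) //; apply/andP; split; lra.
nra.
Qed.

Lemma acos_le (c z : R) : -1 <= c <= 1 -> 0 <= z <= pi -> cos z <= c -> acos c <= z.
Proof.
move=> c1 z0 czc; rewrite leNgt; apply/negP => zc.
have : cos (acos c) < cos z by rewrite ltr_cos // in_itv /= ?acos_ge0 ?acos_lepi.
by rewrite acosK ?in_itv //; lra.
Qed.

Lemma acos_in_pihalf (c : R) : 0 <= c <= 1 -> 0 <= acos c <= pi / 2.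
Proof.
move=> /andP [c0 c1]; have pi0 := pi_gt0 R.
rewrite acos_ge0 /=; last by apply/andP; split => //; lra.
by apply: acos_le; rewrite ?cos_pihalf //; apply/andP; split; lra.
Qed.

Lemma acos_le_add (a b c : R) : 0 <= a <= 1 -> 0 <= b <= 1 -> 0 <= c <= 1 ->
  a * b - Num.sqrt (1 - a ^+ 2) * Num.sqrt (1 - b ^+ 2) <= c ->
  acos c <= acos a + acos b.
Proof.
move=> a01 b01 /andP [c0 c1] abc.
have /andP [ta0 ta] := acos_in_pihalf a01; have /andP [tb0 tb] := acos_in_pihalf b01.
move: a01 b01 => /andP [a0 a1] /andP [b0 b1].
apply: acos_le; [apply/andP; split; lra | apply/andP; split; lra |].
by rewrite cosD !acosK ?sin_acos ?in_itv //=; apply/andP; split; lra.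
Qed.

Lemma sqrt1m_in01 (eps : R) : 0 <= eps <= 1 -> 0 <= Num.sqrt (1 - eps ^+ 2) <= 1.
Proof.
case/andP => e0 e1.
by rewrite sqrtr_ge0 -[X in _ <= X]sqrtr1 ler_sqrt ?lerBlDr ?lerDl ?sqr_ge0 // subr_ge0; nra.
Qed.

Lemma acos_sqrt_le (eps : R) : 0 <= eps < 1 -> acos (Num.sqrt (1 - eps ^+ 2)) <= pi * eps.
Proof.
case/andP => e0 e1.
have ep : 0 <= 1 - eps ^+ 2 by nra.
have c01 : 0 <= Num.sqrt (1 - eps ^+ 2) <= 1 by apply: sqrt1m_in01; rewrite e0 ltW.
have := le_pi_sin (acos_in_pihalf c01).
rewrite sin_acos; last by move: c01 => /andP [? ?]; apply/andP; split; lra.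
by rewrite sqr_sqrtr // opprB addrCA subrr addr0 sqrtr_sqr ger0_norm.
Qed.

Lemma sqrt1m_anti (u u' : R) : 0 <= u -> u <= u' -> u' <= 1 ->
  Num.sqrt (1 - u' ^+ 2) <= Num.sqrt (1 - u ^+ 2).
Proof.
move=> u0 uu' u'1; rewrite ler_sqrt; last by rewrite subr_ge0; nra.
by rewrite lerD2l lerN2 ler_pXn2r ?nnegrE // (le_trans u0).
Qed.

Lemma cos_sum_mono (a b a' b' : R) : 0 <= a <= a' -> a' <= 1 -> 0 <= b <= b' -> b' <= 1 ->
  a * b - Num.sqrt (1 - a ^+ 2) * Num.sqrt (1 - b ^+ 2) <=
  a' * b' - Num.sqrt (1 - a' ^+ 2) * Num.sqrt (1 - b' ^+ 2).
Proof.
move=> /andP [a0 aa'] a'1 /andP [b0 bb'] b'1.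
have := ler_pM (sqrtr_ge0 _) (sqrtr_ge0 _) (sqrt1m_anti a0 aa' a'1)
  (sqrt1m_anti b0 bb' b'1).
by have := ler_pM a0 b0 aa' bb'; lra.
Qed.

End Trigonometry.

Section SubspaceAngles.
Variable R : realType.
Variable d : nat.
Implicit Types (X W : 'M[R]_d) (v w x : 'cV[R]_d).

Lemma dot_le_proj s (P : 'M[R]_(d, s)) X x w : onb X P ->
  (x^T <= X)%MS -> vnorm x = 1 -> dot x w <= vnorm (P^T *m w).
Proof.
case=> Po /andP [_ XP] xX x1.
have /submxP [a xa] := submx_trans xX XP.
have xE : x = P *m a^T by rewrite -[x]trmxK xa trmx_mul trmxK.
rewrite xE dotMl; apply: le_trans (dot_le_vnorm _ _) _.
by rewrite -(orth_vnorm a^T Po) -xE x1 mul1r.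
Qed.

Lemma proj_attained s (P : 'M[R]_(d, s)) X w : onb X P -> P^T *m w != 0 ->
  exists v, [/\ vnorm v = 1, (v^T <= X)%MS & dot v w = vnorm (P^T *m w)].
Proof.
case=> Po /andP [PX _] bN0.
have b0 : vnorm (P^T *m w) != 0 by rewrite vnorm_eq0.
exists (normalize (P *m (P^T *m w))); split.
- by rewrite vnorm_normalize // -vnorm_eq0 orth_vnorm.
- by rewrite linearZ /= scalemx_sub // trmx_mul (submx_trans (submxMl _ _) PX).
- by rewrite dotZl dotMl orth_vnorm // -vnorm_sq; field.
Qed.

Lemma spherical_triangle x v w : vnorm x = 1 -> vnorm v = 1 -> vnorm w = 1 ->
  dot x v * dot v w - Num.sqrt (1 - dot x v ^+ 2) * Num.sqrt (1 - dot v w ^+ 2)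
  <= dot x w.
Proof.
move=> /unit_dot xx /unit_dot vv /unit_dot ww.
set a := dot x v; set b := dot v w.
(* Decompose x and w into their components along v and orthogonal to v. *)
set x' := x - a *: v; set w' := w - b *: v.
have E : dot x w = a * b + dot x' w'.
  by rewrite /x' /w' !(dotBl, dotBr, dotZl, dotZr) vv -/a -/b; ring.
have Nx : vnorm x' = Num.sqrt (1 - a ^+ 2).
  rewrite vnormE /x' !(dotBl, dotBr, dotZl, dotZr) vv xx (dotC v x) -/a.
  by congr Num.sqrt; ring.
have Nw : vnorm w' = Num.sqrt (1 - b ^+ 2).
  rewrite vnormE /w' !(dotBl, dotBr, dotZl, dotZr) vv ww (dotC w v) -/b.
  by congr Num.sqrt; ring.
rewrite E -Nx -Nw.
by have := Cauchy_Schwarz x' w'; rewrite ler_norml => /andP [h _]; lra.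
Qed.

Definition cos_close (c : R) X1 X2 : Prop :=
  forall v, vnorm v = 1 -> (v^T <= X1)%MS ->
    exists x, [/\ vnorm x = 1, (x^T <= X2)%MS & c <= dot v x].

Lemma proj_transfer s1 s2 (P1 : 'M[R]_(d, s1)) (P2 : 'M[R]_(d, s2)) X1 X2 w c1 c :
  onb X1 P1 -> onb X2 P2 -> vnorm w = 1 -> 0 <= c1 <= vnorm (P1^T *m w) ->
  0 <= c -> cos_close c X1 X2 ->
  c * c1 - Num.sqrt (1 - c ^+ 2) * Num.sqrt (1 - c1 ^+ 2) <= vnorm (P2^T *m w).
Proof.
move=> O1 O2 w1 /andP [c10 hc1] c0 close.
have [P1w0|P1wN0] := eqVneq (P1^T *m w) 0.
  move: hc1; rewrite P1w0 vnorm0 => c1le0.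
  have -> : c1 = 0 by apply/eqP; rewrite eq_le c10 c1le0.
  rewrite mulr0 expr0n /= subr0 sqrtr1 mulr1 sub0r.
  by rewrite (le_trans _ (vnorm_ge0 _)) // oppr_le0 sqrtr_ge0.
have [v [v1 vX vw]] := proj_attained O1 P1wN0.
have [x [x1 xX vx]] := close v v1 vX.
apply: le_trans (dot_le_proj w O2 xX x1).
apply: le_trans (spherical_triangle x1 v1 w1).
apply: cos_sum_mono.
- by rewrite c0 dotC.
- by have := dot_le_vnorm x v; rewrite x1 v1 mulr1.
- by rewrite c10 vw.
- by rewrite vw (le_trans (Bessel _ O1.1)) ?w1.
Qed.

Lemma onb_contraction s (P Q : 'M[R]_(d, s)) X W : onb X P -> onb W Q ->
  forall y, vnorm (P^T *m Q *m y) <= vnorm y.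
Proof.
move=> [Po _] [Qo _] y; rewrite -mulmxA (le_trans (Bessel _ Po)) //.
by rewrite orth_vnorm.
Qed.

Lemma angle_transfer s (PA PB Q : 'M[R]_(d, s)) XA XB W c :
  (0 < s)%N -> onb XA PA -> onb XB PB -> onb W Q -> 0 <= c <= 1 ->
  cos_close c XA XB ->
  acos (sing_min (PB^T *m Q)) <= acos c + acos (sing_min (PA^T *m Q)).
Proof.
move=> s0 OA OB OQ c01 close.
have [y [y1 yB]] := sing_min_attained s0 (onb_contraction OB OQ).
have w1 : vnorm (Q *m y) = 1 by rewrite orth_vnorm // OQ.1.
have yA : sing_min (PA^T *m Q) <= vnorm (PA^T *m (Q *m y)).
  by have := sing_min_lb (PA^T *m Q) y; rewrite y1 mulr1 mulmxA.
have cA01 : 0 <= sing_min (PA^T *m Q) <= 1 by rewrite sing_min_ge0 sing_min_le1.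
have cB01 : 0 <= sing_min (PB^T *m Q) <= 1 by rewrite sing_min_ge0 sing_min_le1.
apply: acos_le_add => //.
apply: le_trans (proj_transfer OA OB w1 _ _ close) _.
- by rewrite sing_min_ge0.
- by case/andP: c01.
- by rewrite -mulmxA in yB.
Qed.

End SubspaceAngles.

Section MaximalAngle.
Variable R : realType.
Variables s d : nat.
Implicit Types (X W : 'M[R]_d).

Lemma onb_xget X : \rank X = s -> onb X (xget 0 [set P : 'M[R]_(d, s) | onb X P]).
Proof. by move=> rX; apply: xgetPex; exact: onb_exists. Qed.

Lemma max_angle_in X W : 0 <= max_angle s X W <= pi / 2.
Proof. by apply: acos_in_pihalf; rewrite sing_min_ge0 sing_min_le1. Qed.

Lemma max_angle_transfer XA XB W c : (0 < s)%N ->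
  \rank XA = s -> \rank XB = s -> \rank W = s -> 0 <= c <= 1 ->
  cos_close c XA XB -> max_angle s XB W <= acos c + max_angle s XA W.
Proof.
move=> s0 rA rB rW c01 close.
exact: angle_transfer s0 (onb_xget rA) (onb_xget rB) (onb_xget rW) c01 close.
Qed.

End MaximalAngle.

Section Perturbation.
Variable R : realType.
Variable d : nat.
Implicit Types (S V : 'M[R]_d) (v x : 'cV[R]_d).

Lemma perturbed_direction S v (eps : R) : vnorm v = 1 ->
  vnorm ((S - 1%:M) *m v) <= eps -> eps < 1 ->
  0 < vnorm (S *m v) /\ Num.sqrt (1 - eps ^+ 2) <= dot v (S *m v) / vnorm (S *m v).
Proof.
move=> v1 Ee e1.
set e := (S - 1%:M) *m v.
have SvE : S *m v = v + e by rewrite /e mulmxBl mul1mx addrC subrK.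
set t := dot v e.
have /andP [tl tu] : - vnorm e <= t <= vnorm e.
  by rewrite -ler_norml; have := Cauchy_Schwarz v e; rewrite v1 mul1r.
have e0 := vnorm_ge0 e.
have Et : dot v (S *m v) = 1 + t by rewrite SvE dotDr unit_dot.
have Es : vnorm (S *m v) ^+ 2 = 1 + 2 * t + vnorm e ^+ 2.
  by rewrite vnorm_sq SvE !(dotDl, dotDr) unit_dot // (dotC e v) -/t vnorm_sq; ring.
have Sv0 : 0 < vnorm (S *m v).
  by have := dot_le_vnorm v (S *m v); rewrite v1 mul1r Et; lra.
have key : (1 - eps ^+ 2) * vnorm (S *m v) ^+ 2 <= dot v (S *m v) ^+ 2.
  have t2 : t ^+ 2 <= vnorm e ^+ 2.
    by rewrite -[t ^+ 2]real_normK ?num_real // ler_pXn2r ?nnegrE // ler_norml tl tu.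
  have E2 : vnorm e ^+ 2 <= eps ^+ 2 by rewrite ler_pXn2r ?nnegrE //; lra.
  have h : 0 <= (eps ^+ 2 - vnorm e ^+ 2) * (1 + 2 * t + vnorm e ^+ 2).
    by apply: mulr_ge0; [lra | rewrite -Es sqr_ge0].
  have h2 : 0 <= (t + vnorm e ^+ 2) ^+ 2 := sqr_ge0 _.
  rewrite Es Et; nra.
have ep : 0 <= 1 - eps ^+ 2 by nra.
split => //; rewrite ler_pdivlMr // -(ler_pXn2r (_ : (0 < 2)%N)) ?nnegrE.
- by rewrite exprMn sqr_sqrtr.
- by [].
- by rewrite mulr_ge0 ?sqrtr_ge0 ?vnorm_ge0.
- by rewrite Et; lra.
Qed.

(* V is close to its image S V: take x = S v / |S v|. *)
Lemma image_close S V (eps : R) : spec_norm (S - 1%:M) = eps -> eps < 1 ->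
  cos_close (Num.sqrt (1 - eps ^+ 2)) V (img_sub S V).
Proof.
move=> <- e1 v v1 vV.
have [Sv0 cosv] := perturbed_direction v1 (spec_norm_ub _ v1) e1.
exists (normalize (S *m v)); split.
- by rewrite vnorm_normalize // -vnorm_gt0.
- by rewrite linearZ /= scalemx_sub // trmx_mul submxMr.
- by rewrite dotZr mulrC.
Qed.

(* S V is close to V: a unit x = S u of S V is near the unit vector u / |u| of V. *)
Lemma preimage_close S V (eps : R) : spec_norm (S - 1%:M) = eps -> eps < 1 ->
  cos_close (Num.sqrt (1 - eps ^+ 2)) (img_sub S V) V.
Proof.
move=> <- e1 x x1 /submxP [D xE].
set u := (D *m V)^T.
have xu : x = S *m u by rewrite -[x]trmxK xE mulmxA trmx_mul trmxK.
have uN0 : u != 0.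
  by apply: contra_eq_neq x1; rewrite xu => ->; rewrite mulmx0 vnorm0 eq_sym oner_eq0.
set v := normalize u; have v1 : vnorm v = 1 := vnorm_normalize uN0.
have [_ cosv] := perturbed_direction v1 (spec_norm_ub _ v1) e1.
exists v; split => //; first by rewrite linearZ /= scalemx_sub // trmxK submxMl.
have Sv : S *m v = (vnorm u)^-1 *: x by rewrite -scalemxAr -xu.
have u0 : (vnorm u)^-1 != 0 by rewrite invr_eq0 vnorm_eq0.
move: cosv; rewrite Sv vnormZ x1 mulr1 ger0_norm ?invr_ge0 ?vnorm_ge0 //.
by rewrite dotZr mulrC mulrA mulVf // mul1r dotC.
Qed.

End Perturbation.

Lemma pi_le_const (R : realType) : pi <= pi / 2 + Num.sqrt (pi ^+ 2 / 4 + 1) :> R.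
Proof.
have pi0 := pi_gt0 R; rewrite {1}[pi]splitr lerD2l.
have -> : (pi : R) ^+ 2 / 4 = (pi / 2) ^+ 2 by field.
apply: (@le_trans _ _ (Num.sqrt ((pi / 2) ^+ 2))).
  by rewrite sqrtr_sqr ger0_norm // divr_ge0 // ltW.
by rewrite ler_sqrt ?lerDl // addr_ge0 ?sqr_ge0.
Qed.

Unset Implicit Arguments.

Theorem lemma3p3 (R : realType) (s d : nat) (V W S : 'M[R]_d) :
  (0 < s)%N ->
  in_Grass s V -> in_Grass s W -> in_Grass s (img_sub S V) ->
  `| max_angle s (img_sub S V) W - max_angle s V W |
    <= (pi / 2 + Num.sqrt (pi ^+ 2 / 4 + 1)) * spec_norm (S - 1%:M).
Proof.
move=> s0 rV rW rSV.
set eps := spec_norm (S - 1%:M); set C := pi / 2 + _.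
have d0 : (0 < d)%N by move: (rank_leq_row V); rewrite rV; lia.
have e0 : 0 <= eps := spec_norm_ge0 _ d0.
have piC : pi * eps <= C * eps := ler_wpM2r e0 (pi_le_const R).
have /andP [a0 a1] := max_angle_in s V W.
have /andP [b0 b1] := max_angle_in s (img_sub S V) W.
have pi0 := pi_gt0 R.
rewrite ler_distl; have [e1|e1] := ltP eps 1; last by apply/andP; split; nra.
(* For eps < 1, V and S V are sqrt (1 - eps^2)-close in both directions,
   and the corresponding angle asin eps is at most pi eps. *)
have c01 : 0 <= Num.sqrt (1 - eps ^+ 2) <= 1 by apply: sqrt1m_in01; rewrite e0 ltW.
have AB := max_angle_transfer s0 rV rSV rW c01 (image_close erefl e1).
have BA := max_angle_transfer s0 rSV rV rW c01 (preimage_close erefl e1).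
have : acos (Num.sqrt (1 - eps ^+ 2)) <= pi * eps by apply: acos_sqrt_le; rewrite e0.
by move=> asin_le; apply/andP; split; lra.
Qed.
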